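(* For every odd prime $p$, the graph $ER'(p)$ satisfies $\chi(ER'(p))\ge 4$.
   Context: $\chi$ denotes the chromatic number. Let $p$ be an odd prime and $m=(p-1)/2$. Let $V(ER'(p))$ be the set of nonzero integer vectors $x=(x_1,x_2,x_3)\in\{-m,\dots,-1,0,1,\dots,m\}^3$ whose first nonzero entry equals $1$ (equivalently: take the representatives $[0,0,1]$, $[0,1,a]$, $[1,a,b]$, $a,b\in\{0,\dots,p-1\}$, of the one-dimensional subspaces of $\mathbb{F}_p^3$, and replace every entry $x_i>m$ by $x_i-p$). The graph $ER'(p)$ has this vertex set, with two vertices adjacent iff they are orthogonal as vectors of $\mathbb{R}^3$ under the standard inner product. (For $p=3$, $ER'(3)$ is the 13-vertex orthogonality graph $G_{13}$ of the vectors in $\{0,\pm1\}^3$ with first nonzero entry $1$.) *)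

From mathcomp Require Import all_boot all_order all_algebra.
Set Implicit Arguments. Unset Strict Implicit. Unset Printing Implicit Defensive.
Import Order.TTheory GRing.Theory Num.Theory.
Local Open Scope ring_scope.

Definition vec3 := (int * int * int)%type.

Definition mhalf (p : nat) : nat := (p.-1)./2.

Definition in_range (p : nat) (z : int) : bool :=
  (- (mhalf p)%:Z <= z) && (z <= (mhalf p)%:Z).

(* first nonzero entry equals 1 (this also forces x <> 0) *)
Definition first_nonzero_is_one (x : vec3) : bool :=
  let: (a, b, c) := x in
  if a != 0 then a == 1 else if b != 0 then b == 1 else c == 1.

Definition ER_vertex (p : nat) (x : vec3) : bool :=
  let: (a, b, c) := x in
  [&& in_range p a, in_range p b, in_range p c & first_nonzero_is_one x].

Definition dot3 (x y : vec3) : int :=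
  let: (a, b, c) := x in let: (a', b', c') := y in a * a' + b * b' + c * c'.

Definition ER_adj (p : nat) (x y : vec3) : bool :=
  [&& ER_vertex p x, ER_vertex p y & dot3 x y == 0].

Definition proper_coloring (T : Type) (V : T -> bool) (E : T -> T -> bool)
  (k : nat) (f : T -> nat) : Prop :=
  (forall x, V x -> (f x < k)%N) /\ (forall x y, E x y -> f x <> f y).

Definition colorable (T : Type) (V : T -> bool) (E : T -> T -> bool) (k : nat) : Prop :=
  exists f : T -> nat, proper_coloring V E k f.

(** ER'(3) is the 13-vertex graph G13, and for every odd prime p the vectors of
    G13 (entries in {-1,0,1}) are vertices of ER'(p) with the same
    orthogonality relation, so G13 is a subgraph of ER'(p).  G13 has no proper
    3-colouring, which is checked by an exhaustive backtracking search. *)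

From mathcomp Require Import all_boot all_order all_algebra.
From mathcomp Require Import zify.
Import Order.TTheory GRing.Theory Num.Theory.

Set Implicit Arguments.
Unset Strict Implicit.
Unset Printing Implicit Defensive.

Section Colorability.
Variables (T : Type) (V : T -> bool) (E : T -> T -> bool).

Lemma colorable_leq (k k' : nat) :
  (k <= k')%N -> colorable V E k -> colorable V E k'.
Proof.
move=> le_kk' [f [f_lt f_adj]]; exists f; split=> // x Vx.
exact: leq_trans (f_lt x Vx) le_kk'.
Qed.

Lemma colorable_subgraph (V' : T -> bool) (E' : T -> T -> bool) (k : nat) :
  (forall x, V x -> V' x) -> (forall x y, E x y -> E' x y) ->
  colorable V' E' k -> colorable V E k.
Proof.
move=> sub_V sub_E [f [f_lt f_adj]]; exists f; split=> [x /sub_V|x y /sub_E].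
  exact: f_lt.
exact: f_adj.
Qed.

End Colorability.

Section BacktrackColoring.
Variables (k : nat) (es : seq (nat * nat)).
Hypothesis es_sorted : all (fun e => e.1 < e.2)%N es.

(* A colouring of the vertices [0, size c) is proper on every edge it covers;
   since [e.1 < e.2], an edge is covered as soon as its larger end is. *)
Definition proper_prefix (c : seq nat) : bool :=
  all (fun e => (e.2 < size c)%N ==> (nth 0 c e.1 != nth 0 c e.2)) es.

Definition extend_prefix (t : seq nat) : seq (seq nat) :=
  [seq rcons t x | x <- iota 0 k & proper_prefix (rcons t x)].

Fixpoint proper_prefixes (n : nat) : seq (seq nat) :=
  if n is n'.+1 then flatten [seq extend_prefix t | t <- proper_prefixes n']
  else [:: [::]].

Lemma proper_prefix_rcons (t : seq nat) (x : nat) :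
  proper_prefix (rcons t x) -> proper_prefix t.
Proof.
move=> /allP tx_proper; apply/allP => e e_in; apply/implyP => e2_lt.
have e_lt := allP es_sorted e e_in.
move/implyP: (tx_proper e e_in); rewrite size_rcons ltnS (ltnW e2_lt).
by rewrite !nth_rcons e2_lt (ltn_trans e_lt e2_lt); apply.
Qed.

Lemma proper_prefixes_complete (c : seq nat) :
  all (fun x => x < k)%N c -> proper_prefix c -> c \in proper_prefixes (size c).
Proof.
elim/last_ind: c => [//|t x IH]; rewrite all_rcons size_rcons.
move=> /andP[x_lt t_lt] tx_proper /=; apply/flatten_mapP; exists t.
  exact: IH t_lt (proper_prefix_rcons tx_proper).
by apply/mapP; exists x; rewrite // mem_filter tx_proper mem_iota.
Qed.

End BacktrackColoring.

Definition G13_vertices : seq vec3 :=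
  let s := [:: -1; 0; 1]%R in
  [seq x <- [seq (ab, c) | ab <- [seq (a, b) | a <- s, b <- s], c <- s] | ER_vertex 3 x].

Definition G13_edges : seq (nat * nat) :=
  [seq e <- [seq (i, j) | j <- iota 0 13, i <- iota 0 j] |
     dot3 (nth (0, 0, 0)%R G13_vertices e.1) (nth (0, 0, 0)%R G13_vertices e.2) == 0%R].

Lemma G13_no_proper_3_prefix : proper_prefixes 3 G13_edges 13 = [::].
Proof. by vm_compute. Qed.

Lemma G13_not_3_colorable : ~ colorable (ER_vertex 3) (ER_adj 3) 3.
Proof.
move=> [f [f_lt f_adj]].
have [size_vs sorted_es] : size G13_vertices = 13 /\
  all (fun e => e.1 < e.2)%N G13_edges by vm_compute.
have edges_adj : all (fun e => (e.2 < 13)%N && ER_adj 3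
    (nth (0, 0, 0)%R G13_vertices e.1) (nth (0, 0, 0)%R G13_vertices e.2))
    G13_edges by vm_compute.
pose c := map f G13_vertices.
have c_lt : all (fun x => x < 3)%N c.
  apply/allP => _ /mapP[v v_in ->]; apply: f_lt.
  by move: v_in; rewrite mem_filter => /andP[].
have c_proper : proper_prefix G13_edges c.
  apply/allP => e e_in; apply/implyP => _.
  have /andP[e2_lt e_adj] := allP edges_adj e e_in.
  have e1_lt := ltn_trans (allP sorted_es e e_in) e2_lt.
  by rewrite !(nth_map (0, 0, 0)%R) ?size_vs //; apply/eqP/f_adj.
have := proper_prefixes_complete sorted_es c_lt c_proper.
by rewrite size_map size_vs G13_no_proper_3_prefix.
Qed.

Section MhalfMonotone.
Variables (p q : nat).
Hypothesis le_pq : (mhalf p <= mhalf q)%N.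

Lemma ER_vertex_mhalf_mono (x : vec3) : ER_vertex p x -> ER_vertex q x.
Proof.
have in_range_mono z : in_range p z -> in_range q z.
  by rewrite /in_range => /andP[? ?]; apply/andP; split; lia.
case: x => [[a b] c] /and4P[? ? ? ?].
by apply/and4P; split=> //; exact: in_range_mono.
Qed.

Lemma ER_adj_mhalf_mono (x y : vec3) : ER_adj p x y -> ER_adj q x y.
Proof.
by move=> /and3P[/ER_vertex_mhalf_mono ? /ER_vertex_mhalf_mono ? ?]; apply/and3P.
Qed.

End MhalfMonotone.

Lemma mhalf_odd_prime_gt0 (p : nat) : prime p -> odd p -> (0 < mhalf p)%N.
Proof.
by move=> /prime_gt1; rewrite /mhalf; case: p => [|[|[|p]]].
Qed.

Theorem mainTheorem5 (p : nat) (hp : prime p) (hodd : odd p) :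
  forall k : nat, colorable (ER_vertex p) (ER_adj p) k -> (4 <= k)%N.
Proof.
move=> k colorable_k; rewrite leqNgt ltnS; apply/negP => k_le3.
have le_3p : (mhalf 3 <= mhalf p)%N := mhalf_odd_prime_gt0 hp hodd.
apply: G13_not_3_colorable; apply: colorable_leq k_le3 _.
apply: colorable_subgraph colorable_k.
  exact: ER_vertex_mhalf_mono.
exact: ER_adj_mhalf_mono.
Qed.
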